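(* Let $G$ be a finite simple $r$-regular graph, where $r \geq 3$ is odd, and let $k \geq 5$ be an integer. Then $G$ is completely $k$-magic.
   Context: For an integer $k \geq 2$, $\mathbb{Z}_k$ is the integers modulo $k$. For $c \in \mathbb{Z}_k$, a graph $G$ is $c$-sum $k$-magic if there is an edge labeling $\ell : E(G) \to \mathbb{Z}_k \setminus \{0\}$ such that for every vertex $v$, $\sum_{u \in N(v)} \ell(uv) \equiv c \pmod k$. $G$ is completely $k$-magic if it is $c$-sum $k$-magic for every $c \in \mathbb{Z}_k$. *)

From mathcomp Require Import all_boot all_order all_algebra.
Set Implicit Arguments. Unset Strict Implicit. Unset Printing Implicit Defensive.
Import GRing.Theory.
Local Open Scope ring_scope.

Definition simple_graph (T : finType) (e : rel T) : Prop :=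
  symmetric e /\ irreflexive e.

Definition regular (T : finType) (e : rel T) (r : nat) : Prop :=
  forall v : T, #|[set u | e v u]| = r.

(* An edge labeling by 'Z_k \ {0}, represented as a symmetric function on
   ordered pairs; only its values on edges matter. *)
Definition csum_kmagic (T : finType) (e : rel T) (k : nat) (c : 'Z_k) : Prop :=
  exists l : T -> T -> 'Z_k,
    (forall u v, e u v -> l u v = l v u) /\
    (forall u v, e u v -> l u v != 0) /\
    (forall v, \sum_(u | e v u) l v u = c).

Definition completely_kmagic (T : finType) (e : rel T) (k : nat) : Prop :=
  forall c : 'Z_k, csum_kmagic e c.

From mathcomp Require Import all_boot all_order all_algebra all_fingroup zify.
Set Implicit Arguments. Unset Strict Implicit. Unset Printing Implicit Defensive.
Import GRing.Theory.

(* Orienting every edge both ways gives a relation with all in- and out-degrees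
   equal to r; by Hall's theorem it splits into r permutations (Koenig).  Thus
   every ordered pair (v, u) of adjacent vertices gets a colour [col v u < r]
   such that at each vertex v both [u |-> col v u] and [u |-> col u v] are
   bijections onto {0, ..., r-1}.  Labelling the edge uv with
   [+-(a + n (col v u) + n (col u v))] makes every vertex sum equal to
   [+-(r a + 2 (n 0 + ... + n (r-1)))].  It remains to choose a in {0, 1}, the
   sign and the weights n i with [0 < a + n i + n j < k] hitting c modulo k:
   since r is odd, a can be chosen so that [2 x = c - r a] is solvable modulo
   k, and the admissible sums of weights then cover all residues x modulo k
   (or modulo k/2), except for k = 5, r = 3, which is settled by hand. *)

Definition neighbours (T T' : finType) (N : T -> {set T'}) (S : {set T}) : {set T'} :=
  \bigcup_(x in S) N x.

Definition hall_condition (T T' : finType) (N : T -> {set T'}) (A : {set T}) : Prop :=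
  forall S : {set T}, S \subset A -> #|S| <= #|neighbours N S|.

Definition distinct_representatives (T T' : finType) (N : T -> {set T'}) (A : {set T})
    (f : T -> T') : Prop :=
  {in A &, injective f} /\ {in A, forall x, f x \in N x}.

Lemma neighbours1 (T T' : finType) (N : T -> {set T'}) (x : T) : neighbours N [set x] = N x.
Proof. by rewrite /neighbours big_set1. Qed.

Lemma distinct_representatives_glue (T T' : finType) (N : T -> {set T'})
    (A B : {set T}) (C : {set T'}) (f g : T -> T') :
  distinct_representatives N B f -> {in B, forall x, f x \in C} ->
  distinct_representatives (fun x => N x :\: C) (A :\: B) g ->
  distinct_representatives N A (fun x => if x \in B then f x else g x).
Proof.
move=> [f_inj f_in] fC [g_inj g_in].
have g_notin x : x \in A -> x \notin B -> g x \in N x /\ g x \notin C.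
  by move=> xA xB; have := g_in x; rewrite !inE xB xA => /(_ isT) /andP[].
split=> [x y xA yA | x xA] /=; last first.
  by case: ifP => xB; [apply: f_in | case: (g_notin x xA); rewrite ?xB].
case: ifP => xB; case: ifP => yB.
- exact: f_inj.
- by move=> fg; case: (g_notin y yA); rewrite ?yB // -fg fC.
- by move=> fg; case: (g_notin x xA); rewrite ?xB // fg fC.
- by apply: g_inj; rewrite inE ?xB ?yB.
Qed.

Lemma hall_condition_tight (T T' : finType) (N : T -> {set T'}) (A S : {set T}) :
  S \subset A -> hall_condition N A -> #|neighbours N S| <= #|S| ->
  hall_condition (fun x => N x :\: neighbours N S) (A :\: S).
Proof.
move=> sSA hallA tight U sU.
move: sU; rewrite subsetD => /andP[sUA disjUS].
have hallUS := hallA (U :|: S) ltac:(by rewrite subUset sUA).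
have sub : neighbours N (U :|: S) :\: neighbours N S
             \subset neighbours (fun x => N x :\: neighbours N S) U.
  apply/subsetP => y; rewrite inE => /andP[yS /bigcupP[x]].
  rewrite inE => /orP[xU | xS] yN; first by apply/bigcupP; exists x; rewrite ?inE ?yS.
  by case/negP: yS; apply/bigcupP; exists x.
have := subset_leq_card sub; rewrite cardsD.
have := subset_leq_card (subsetIr (neighbours N (U :|: S)) (neighbours N S)).
move: hallUS; rewrite cardsU (disjoint_setI0 disjUS) cards0; lia.
Qed.

Lemma hall_condition_slack (T T' : finType) (N : T -> {set T'}) (A : {set T}) (x0 : T) (y0 : T') :
  x0 \in A ->
  (forall S : {set T}, S \proper A -> S != set0 -> #|S| < #|neighbours N S|) ->
  hall_condition (fun x => N x :\ y0) (A :\ x0).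
Proof.
move=> x0A slack U sU.
have [-> | U0] := eqVneq U set0; first by rewrite cards0.
have pUA : U \proper A := sub_proper_trans sU (properD1 x0A).
have sub : neighbours N U :\ y0 \subset neighbours (fun x => N x :\ y0) U.
  apply/subsetP => y; rewrite 2!inE => /andP[yy0 /bigcupP[x xU yN]].
  by apply/bigcupP; exists x; rewrite ?inE ?yy0.
have := subset_leq_card sub; have := cardsD1 y0 (neighbours N U).
have := slack U pUA U0; lia.
Qed.

Theorem hall_marriage (T T' : finType) (f0 : T -> T') (N : T -> {set T'}) (A : {set T}) :
  hall_condition N A -> exists f, distinct_representatives N A f.
Proof.
have [n] := ubnP #|A|; elim: n N A => // n IH N A ltA hallA.
have [-> | [x0 x0A]] := set_0Vmem A; first by exists f0; split=> ?; rewrite inE.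
have [/existsP[S /and3P[pSA S0 tight]] | /existsPn slack] :=
  boolP [exists S : {set T}, [&& S \proper A, S != set0 & #|neighbours N S| <= #|S|]].
- have sSA := proper_sub pSA.
  have [f Sf] := IH N S (leq_trans (proper_card pSA) ltA)
                      (fun U sU => hallA U (subset_trans sU sSA)).
  have ltAS : #|A :\: S| < n.
    rewrite cardsD (setIidPr sSA); move: S0 (proper_card pSA) ltA; rewrite -card_gt0; lia.
  have [g ASg] := IH _ _ ltAS (hall_condition_tight sSA hallA tight).
  exists (fun x => if x \in S then f x else g x).
  apply: distinct_representatives_glue ASg => // x xS.
  by apply/bigcupP; exists x => //; case: Sf => _ ->.
- have /card_gt0P[y1 y1N] : 0 < #|N x0|.
    by rewrite -neighbours1 (leq_trans _ (hallA _ _)) ?cards1 ?sub1set.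
  have ltAx : #|A :\ x0| < n by move: ltA; rewrite (cardsD1 x0 A) x0A; lia.
  have slackA (S : {set T}) : S \proper A -> S != set0 -> #|S| < #|neighbours N S|.
    by move=> pSA S0; have := slack S; rewrite pSA S0 /= -ltnNge.
  have [g Ag] := IH _ _ ltAx (hall_condition_slack y1 x0A slackA).
  exists (fun x => if x \in [set x0] then y1 else g x).
  apply: distinct_representatives_glue Ag.
  + by split=> [x y | x]; rewrite !inE => /eqP-> // /eqP->.
  + by move=> x _; rewrite inE.
Qed.

Definition regular_rel (T : finType) (R : rel T) (d : nat) : Prop :=
  (forall v, #|[set u | R v u]| = d) /\ (forall u, #|[set v | R v u]| = d).

Lemma regular_rel_hall (T : finType) (R : rel T) (d : nat) :
  0 < d -> regular_rel R d -> hall_condition (fun v => [set u | R v u]) setT.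
Proof.
move=> d_gt0 [out_deg in_deg] S _; rewrite -(leq_pmul2l d_gt0).
set NS := neighbours _ S.
have outS : d * #|S| = \sum_(x in S) \sum_(y in NS) R x y.
  rewrite -sum1_card big_distrr /=; apply: eq_bigr => x xS.
  rewrite muln1 -(out_deg x) -sum1_card big_mkcond [RHS]big_mkcond /=.
  apply: eq_bigr => y _; rewrite inE.
  case Rxy: (R x y); last by case: ifP.
  by rewrite ifT //; apply/bigcupP; exists x; rewrite ?inE.
rewrite outS exchange_big /= mulnC -sum_nat_const leq_sum // => y _.
rewrite -(in_deg y) -sum1_card big_mkcond [in X in _ <= X]big_mkcond /=.
apply: leq_sum => x _; rewrite inE.
by case: (x \in S); case: (R x y).
Qed.

Lemma regular_rel_perm (T : finType) (R : rel T) (d : nat) :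
  regular_rel R d.+1 -> exists p : {perm T}, forall v, R v (p v).
Proof.
move=> Rreg; have [f [f_inj f_in]] := hall_marriage id (regular_rel_hall (ltn0Sn d) Rreg).
have f_injT : injective f by move=> x y; apply: f_inj; rewrite inE.
by exists (perm f_injT) => v; rewrite permE; have := f_in v (in_setT v); rewrite inE.
Qed.

Lemma regular_rel_remove_perm (T : finType) (R : rel T) (d : nat) (p : {perm T}) :
  regular_rel R d.+1 -> (forall v, R v (p v)) ->
  regular_rel [rel v u | R v u && (u != p v)] d.
Proof.
move=> [out_deg in_deg] Rp; split=> [v | u].
  have := cardsD1 (p v) [set u | R v u]; rewrite out_deg inE Rp add1n => -[->].
  by apply: eq_card => u; rewrite !inE andbC.
have := cardsD1 (p^-1 u)%g [set v | R v u].
rewrite in_deg inE -{2}(permKV p u) Rp add1n => -[->].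
by apply: eq_card => v; rewrite !inE andbC /= [v == _]eq_sym (can2_eq (permKV p) (permK p)).
Qed.

Theorem regular_rel_perm_decomposition (T : finType) (R : rel T) (d : nat) :
  regular_rel R d ->
  exists s : 'I_d -> {perm T},
    (forall i v, R v (s i v)) /\ (forall v, injective (fun i => s i v)).
Proof.
elim: d R => [|d IH] R Rreg; first by exists (fun _ => 1%g); split=> [[]|v []].
have [p Rp] := regular_rel_perm Rreg.
have [s [Rs s_inj]] := IH _ (regular_rel_remove_perm Rreg Rp).
exists (fun i => if unlift ord0 i is Some j then s j else p); split=> [i v | v i i'] /=.
  by case: unliftP => [j _|_] //; case/andP: (Rs j v).
have s_neq_p j : s j v != p v by case/andP: (Rs j v).
case: unliftP => [j ->|->]; case: unliftP => [j' ->|->] //.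
- by move/s_inj ->.
- by move/eqP; rewrite (negbTE (s_neq_p j)).
- by move/esym/eqP; rewrite (negbTE (s_neq_p j')).
Qed.

Lemma reindex_card_inj (R : Type) (idx : R) (op : Monoid.com_law idx)
    (T : finType) (P : pred T) (d : nat) (g : 'I_d -> T) (F : T -> R) :
  injective g -> (forall i, P (g i)) -> #|[set u | P u]| = d ->
  \big[op/idx]_(u | P u) F u = \big[op/idx]_(i < d) F (g i).
Proof.
move=> g_inj Pg cardP.
have imP : g @: setT = [set u | P u].
  apply/eqP; rewrite eqEcard card_imset // cardsT card_ord cardP leqnn andbT.
  by apply/subsetP => _ /imsetP[i _ ->]; rewrite inE.
rewrite (eq_bigl (fun u => u \in g @: setT)) => [|u]; last by rewrite imP inE.
rewrite big_imset /=; last by move=> i j _ _ /g_inj.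
by apply: eq_bigl => i; rewrite in_setT.
Qed.

Lemma regular_rel_colouring (T : finType) (R : rel T) (d : nat) :
  regular_rel R d ->
  exists col : T -> T -> nat, forall v (F : nat -> nat),
    \sum_(u | R v u) F (col v u) = \sum_(i < d) F i /\
    \sum_(u | R u v) F (col u v) = \sum_(i < d) F i.
Proof.
move=> Rreg; have [out_deg in_deg] := Rreg.
have [s [Rs s_inj]] := regular_rel_perm_decomposition Rreg.
pose col v u := if [pick i | s i v == u] is Some i then val i else 0.
have colE i v : col v (s i v) = i.
  rewrite /col; case: pickP => [j /eqP/s_inj -> // | /(_ i)].
  by rewrite eqxx.
exists col => v F.
have sV_inj : injective (fun i => (s i)^-1%g v).
  by move=> i j /= eq_ij; apply: (s_inj ((s i)^-1%g v)); rewrite /= {2}eq_ij !permKV.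
rewrite (reindex_card_inj _ _ (s_inj v)) ?(reindex_card_inj _ _ sV_inj) //.
- by split; apply: eq_bigr => i _; rewrite ?colE // -{2}(permKV (s i) v) colE.
- by move=> i; rewrite -{2}(permKV (s i) v) Rs.
Qed.

Lemma bounded_sum (r lo hi t : nat) :
  lo <= hi -> lo * r <= t <= hi * r ->
  exists n : nat -> nat, (forall i, lo <= n i <= hi) /\ \sum_(i < r) n i = t.
Proof.
elim: r t => [|r IH] t lohi.
  by rewrite !muln0 leqn0 => /eqP->; exists (fun=> lo); rewrite big_ord0 lohi leqnn.
move=> /andP[t_ge t_le].
pose x := minn hi (t - lo * r).
have [n [n_bounds n_sum]] := IH (t - x) lohi ltac:(apply/andP; split; nia).
exists (fun i => if i is j.+1 then n j else x); split=> [[|i] //|]; first by nia.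
by rewrite big_ord_recl /= n_sum; lia.
Qed.

Lemma bounded_sum_mod (r lo hi m t : nat) :
  0 < m -> lo <= hi -> m <= (hi - lo) * r + 1 ->
  exists n : nat -> nat, (forall i, lo <= n i <= hi) /\ \sum_(i < r) n i = t %[mod m].
Proof.
move=> m_gt0 lohi window; pose b := lo * r.
(* aim at the representative of t in [b, b + m) *)
have x_lt_m := ltn_pmod (t + m * b - b) m_gt0.
have [n [n_bounds n_sum]] := @bounded_sum r lo hi (b + (t + m * b - b) %% m) lohi
  ltac:(apply/andP; split; nia).
exists n; split=> //.
have b_le : b <= t + m * b by nia.
by rewrite n_sum modnDmr subnKC // -modnDmr modnMr addn0.
Qed.

Lemma exists_half_mod (K b : nat) : odd K || ~~ odd b -> exists t, 2 * t = b %[mod K].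
Proof.
case/orP => [K_odd | b_even]; last by exists b./2; rewrite mul2n even_halfK.
exists (b * K.+1./2); rewrite mulnCA mul2n even_halfK /= ?K_odd //.
by rewrite mulnS addnC modnMDl.
Qed.

Lemma mul2_eq_mod (K m x y : nat) : K %| 2 * m -> x = y %[mod m] -> 2 * x = 2 * y %[mod K].
Proof.
move=> K_dvd xy; rewrite -(modn_dvdm (2 * x) K_dvd) -(modn_dvdm (2 * y) K_dvd).
by rewrite -!muln_modr xy.
Qed.

Local Open Scope ring_scope.

Lemma Zp_nat_eq (K m n : nat) : (1 < K)%N -> m = n %[mod K] -> (m%:R : 'Z_K) = n%:R.
Proof. by move=> K_gt1 mn; rewrite -(Zp_nat_mod K_gt1) mn Zp_nat_mod. Qed.

Lemma Zp_nat_neq0 (K m : nat) : (0 < m < K)%N -> (m%:R : 'Z_K) != 0.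
Proof.
case/andP=> m_gt0 m_lt; apply/eqP => /(congr1 val).
by rewrite /= val_Zp_nat ?modn_small //; [lia | lia].
Qed.

Definition magic_weights (K r : nat) (c : 'Z_K) (a : nat) (s : bool) (n : nat -> nat) :=
  (forall i j, 0 < a + n i + n j < K)%N /\
  (-1) ^+ s * ((r * a + 2 * \sum_(i < r) n i)%N)%:R = c.

Lemma weight_sum_bounds (K a x y : nat) :
  (1 < K)%N -> (a <= 1)%N ->
  (1 - a <= x <= (K.-1 - a)./2)%N -> (1 - a <= y <= (K.-1 - a)./2)%N ->
  (0 < a + x + y < K)%N.
Proof. lia. Qed.

Lemma magic_weights_generic (K r : nat) (c : 'Z_K) :
  (5 <= K)%N -> (3 <= r)%N -> odd r -> ~~ ((K == 5) && (r == 3))%N ->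
  exists a n, magic_weights r c a false n.
Proof.
move=> K_ge5 r_ge3 r_odd not_5_3; have K_gt1 : (1 < K)%N by lia.
(* [a] makes [c - r a], represented by [c + r a (K - 1)], even when K is; its
   half is then determined modulo [m]. *)
pose a : nat := if odd K then 1 else odd c.
have a_le1 : (a <= 1)%N by rewrite /a; case: ifP; lia.
pose m := if odd K then K else K./2.
have [t t_eq] : exists t, 2 * t = c + r * a * K.-1 %[mod K].
  apply: exists_half_mod; rewrite /a; case: ifP => //= K_even.
  rewrite oddD !oddM r_odd oddb -subn1 oddB ?K_even; last lia.
  by case: (odd c).
have m_gt0 : (0 < m)%N by rewrite /m; case: ifP; lia.
have lo_le_hi : (1 - a <= (K.-1 - a)./2)%N by rewrite /a; case: ifP; case: (odd c); lia.
have window : (m <= ((K.-1 - a)./2 - (1 - a)) * r + 1)%N.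
  set D := ((K.-1 - a)./2 - (1 - a))%N.
  have D3 : (D * 3 <= D * r)%N by rewrite leq_mul2l r_ge3 orbT.
  have [r3 | r_ne3] := eqVneq r 3%N.
    move: not_5_3 D3; rewrite /m /D /a r3 eqxx andbT; case: ifP; case: (odd c); lia.
  have D5 : (D * 5 <= D * r)%N by rewrite leq_mul2l orbC; apply/orP; left; lia.
  move: D3 D5; rewrite /m /D /a; case: ifP; case: (odd c); lia.
have [n [n_bounds n_sum]] := @bounded_sum_mod r _ _ _ t m_gt0 lo_le_hi window.
exists a, n; split.
  by move=> i j; apply: weight_sum_bounds a_le1 (n_bounds i) (n_bounds j).
rewrite expr0 mul1r -[c in RHS]natr_Zp; apply: (Zp_nat_eq K_gt1).
have K_dvd : (K %| 2 * m)%N.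
  by rewrite /m; case: ifP => K_odd; [apply: dvdn_mull | rewrite mul2n even_halfK ?K_odd].
have ra_K : (r * a + (c + r * a * K.-1) = r * a * K + c)%N.
  by rewrite -[in (r * a * K)%N](prednK (ltnW K_gt1)) mulnSr; lia.
rewrite -modnDmr (mul2_eq_mod K_dvd n_sum) modnDmr -modnDmr t_eq modnDmr ra_K.
by rewrite modnMDl.
Qed.

Lemma magic_weights_Z5 (c : 'Z_5) : exists a s n, magic_weights 3 c a s n.
Proof.
have [s [t [t_le3 st]]] : exists (s : bool) t, (t <= 3)%N /\ (-1) ^+ s * ((3 + 2 * t)%N)%:R = c.
  by case: c => [[|[|[|[|[|//]]]]] ?]; [exists false, 1%N | exists true, 3%N
    | exists false, 2%N | exists false, 0%N | exists false, 3%N]; split=> //; apply/val_inj.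
have [n [n_bounds n_sum]] := @bounded_sum 3 0 1 t isT t_le3.
exists 1%N, s, n; split; last by rewrite n_sum.
by move=> i j; move: (n_bounds i) (n_bounds j); lia.
Qed.

Lemma exists_magic_weights (K r : nat) (c : 'Z_K) :
  (5 <= K)%N -> (3 <= r)%N -> odd r -> exists a s n, magic_weights r c a s n.
Proof.
move=> K_ge5 r_ge3 r_odd.
have [/andP[/eqP K5 /eqP r3] | not_5_3] := boolP ((K == 5) && (r == 3))%N.
  by subst K r; apply: magic_weights_Z5.
by have [a [n w]] := magic_weights_generic c K_ge5 r_ge3 r_odd not_5_3; exists a, false, n.
Qed.

Theorem theorem13 (T : finType) (e : rel T) (r k : nat) :
  simple_graph e -> regular e r -> (3 <= r)%N -> odd r -> (5 <= k)%N ->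
  completely_kmagic e k.
Proof.
move=> [e_sym _] e_reg r_ge3 r_odd k_ge5 c.
have [a [s [n [n_bounds n_sum]]]] := exists_magic_weights c k_ge5 r_ge3 r_odd.
have e_regular : regular_rel e r.
  by split=> // u; rewrite -(e_reg u); apply: eq_card => v; rewrite !inE e_sym.
have [col col_sum] := regular_rel_colouring e_regular.
exists (fun u v => (-1) ^+ s * ((a + n (col u v) + n (col v u))%N)%:R); split; [|split].
- by move=> u v _; rewrite addnAC.
- by move=> u v _; rewrite mulr_sign; case: s {n_sum}; rewrite ?oppr_eq0 Zp_nat_neq0.
- move=> v; rewrite -mulr_sumr -natr_sum -n_sum; congr (_ * _%:R).
  rewrite !big_split /= (col_sum v (fun=> a)).1 (col_sum v n).1.
  rewrite (eq_bigl (fun u => e u v)) => [|u]; last by rewrite e_sym.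
  by rewrite (col_sum v n).2 sum_nat_const card_ord -addnA addnn -mul2n.
Qed.
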